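(* Let $n\ge1$ and let $f\in\mathcal{G}_1$ be $n$-ary, $f=2x_1\cdots x_n\left(\sum_{i=1}^n a_ix_i^2+\sum_{i=1}^n b_ix_i+c\right)$, with $a_i\neq 0$ for some $i$. Then $2w_n\in C(f)$ or $2q_n\in C(f)$, where $w_n=x_1\cdots x_n(x_1^2+1)$ and $q_n=x_1^3x_2\cdots x_n$.
   Context: All operations are on $\mathbb{Z}_8$. $\mathcal{G}_1$ is the set of all operations (of any arity $n\ge1$) of the form $2x_1\cdots x_n\left(\sum_{i=1}^n a_ix_i^2+\sum_{i=1}^n b_ix_i+c\right)$ with $a_i,b_i\in\{0,1\}$ and $c\in\{0,1,2,3\}$. For an operation $f$, $C(f)$ denotes the clone generated by $f$ together with binary addition and all unary constant operations. *)

From mathcomp Require Import all_boot all_algebra.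
Set Implicit Arguments. Unset Strict Implicit. Unset Printing Implicit Defensive.
Import GRing.Theory.
Local Open Scope ring_scope.

(* The ring Z_8 (8 >= 2, so 'Z_8 is genuinely Z/8Z). *)
Definition Z8 := 'Z_8.

Definition op (n : nat) := ('I_n -> Z8) -> Z8.

(* C(f): the clone on Z_8 generated by f (of arity k), binary addition and
   all unary constant operations. *)
Inductive inC (k : nat) (f : op k) : forall n : nat, op n -> Prop :=
| inC_proj n (i : 'I_n) : inC f (fun x => x i)
| inC_gen : inC f f
| inC_add : inC f (fun x : 'I_2 -> Z8 => x ord0 + x ord_max)
| inC_const (c : Z8) : inC f (fun _ : 'I_1 -> Z8 => c)
| inC_comp m n (h : op m) (gs : 'I_m -> op n) :
    inC f h -> (forall j, inC f (gs j)) ->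
    inC f (fun x => h (fun j => gs j x))
| inC_ext n (g g' : op n) : inC f g -> (forall x, g x = g' x) -> inC f g'.

(* The member of G_1 with parameters a_i, b_i in {0,1}, c in {0,1,2,3}:
   2 x_1...x_n (sum a_i x_i^2 + sum b_i x_i + c). *)
Definition g1op (n : nat) (a b : 'I_n -> bool) (c : 'I_4) : op n :=
  fun x => 2 * (\prod_i x i) *
    (\sum_i (a i)%:R * x i ^+ 2 + \sum_i (b i)%:R * x i + (nat_of_ord c)%:R).

(* w_n = x_1...x_n (x_1^2 + 1), where i0 plays the role of index 1. *)
Definition w_op (n : nat) (i0 : 'I_n) : op n :=
  fun x => (\prod_i x i) * (x i0 ^+ 2 + 1).

(* q_n = x_1^3 x_2 ... x_n, where i0 plays the role of index 1. *)
Definition q_op (n : nat) (i0 : 'I_n) : op n :=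
  fun x => x i0 ^+ 3 * \prod_(i | i != i0) x i.

(* Put al(u) = u^3 - u, be(u) = u^2 - u, N = sum_i (a_i + b_i) + c and let
   xh_j be the product of the variables other than x_j. Then
     f = sum_j 2 xh_j (a_j al(x_j) + b_j be(x_j)) + 2 N x_1...x_n.
   Fix p with a_p = 1. For m <> p, the summand of index m is in C(f): freeze
   all variables but x_p, x_m, substitute affine forms in x_p, x_m for them
   and add the results with suitable multiplicities. Subtracting these
   summands from f leaves xh_p * 2 (al(x_p) + b_p be(x_p) + N x_p); a second
   combination of substitutions for x_p turns this into 2 xh_p x_p^3 when N
   is odd and into 2 xh_p x_p (x_p^2 + 1) when N is even. Renaming variables
   moves p to the first position. *)

From mathcomp Require Import all_boot all_algebra perm ring.
Set Implicit Arguments.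
Unset Strict Implicit.
Import GRing.Theory.
Local Open Scope ring_scope.

Definition Z8_enum : seq Z8 := [seq inZp i | i <- iota 0 8].

Lemma mem_Z8_enum (z : Z8) : z \in Z8_enum.
Proof.
rewrite -[z]valZpK; apply: map_f; rewrite mem_iota; exact: ltn_ord.
Qed.

Lemma Z8_eq2 (F G : Z8 -> Z8 -> Z8) :
  all (fun s => all (fun t => F s t == G s t) Z8_enum) Z8_enum ->
  forall s t, F s t = G s t.
Proof.
move=> /allP FG s t; have /allP FGs := FG s (mem_Z8_enum s).
exact/eqP/FGs/mem_Z8_enum.
Qed.

Lemma Z8_mulr7n (z : Z8) : z *+ 7 = - z.
Proof. by apply/eqP; rewrite -subr_eq0 opprK -mulrSr -mulr_natr pchar_Zp // mulr0. Qed.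

Definition setv n (x : 'I_n -> Z8) (i : 'I_n) (u : Z8) : 'I_n -> Z8 :=
  fun j => if j == i then u else x j.

Lemma setv_id n (x : 'I_n -> Z8) i u : setv x i u i = u.
Proof. by rewrite /setv eqxx. Qed.

Lemma setv_ne n (x : 'I_n -> Z8) i j u : j != i -> setv x i u j = x j.
Proof. by rewrite /setv => /negbTE->. Qed.

Section CloneClosure.
Variables (k : nat) (f : op k).

Definition inC_map m n (F : ('I_n -> Z8) -> 'I_m -> Z8) :=
  forall j, inC f (fun x => F x j).

Lemma inC_comp_map m n (g : op m) (F : ('I_n -> Z8) -> 'I_m -> Z8) :
  inC f g -> inC_map F -> inC f (fun x => g (F x)).
Proof. exact: inC_comp. Qed.

Lemma inC_map_set m n (F : ('I_n -> Z8) -> 'I_m -> Z8) (i : 'I_m) (h : op n) :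
  inC_map F -> inC f h -> inC_map (fun x => setv (F x) i (h x)).
Proof. by move=> CF Ch j; rewrite /setv; case: (j == i). Qed.

Lemma inC_addr n (g h : op n) : inC f g -> inC f h -> inC f (fun x => g x + h x).
Proof.
move=> Cg Ch; pose F x (j : 'I_2) := if j == ord0 then g x else h x.
have CF : inC_map F by move=> j; rewrite /F; case: (j == ord0).
exact: inC_comp_map (inC_add f) CF.
Qed.

Variables (n : nat) (i0 : 'I_n).

Lemma inC_cst (z : Z8) : inC f (fun _ : 'I_n -> Z8 => z).
Proof. exact: inC_comp_map (inC_const f z) (fun _ => inC_proj f i0). Qed.

Lemma inC_mulrn (g : op n) m : inC f g -> inC f (fun x => g x *+ m).
Proof.
move=> Cg; elim: m => [|m Cgm]; first exact: inC_cst.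
by apply: inC_ext (inC_addr Cg Cgm) _ => x; rewrite mulrS.
Qed.

Lemma inC_sum (I : Type) (r : seq I) (P : pred I) (F : I -> op n) :
  (forall i, P i -> inC f (F i)) -> inC f (fun x => \sum_(i <- r | P i) F i x).
Proof.
move=> CF; elim: r => [|i r Cr].
  by apply: inC_ext (inC_cst 0) _ => x; rewrite big_nil.
have CPi : inC f (fun x => if P i then F i x else 0).
  by case Pi: (P i); [exact: CF | exact: inC_cst].
apply: inC_ext (inC_addr CPi Cr) _ => x.
by rewrite big_cons; case: (P i); rewrite ?add0r.
Qed.

End CloneClosure.

Definition affine (l : nat * nat * nat) (s t : Z8) : Z8 := s *+ l.1.1 + t *+ l.1.2 + l.2%:R.

Lemma inC_affine k (f : op k) n (i j : 'I_n) l : inC f (fun x => affine l (x i) (x j)).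
Proof.
apply: inC_addr; last exact: inC_cst.
by apply: inC_addr; apply: (inC_mulrn i); apply: inC_proj.
Qed.

Definition cube_sub (u : Z8) := u ^+ 3 - u.
Definition sqr_sub (u : Z8) := u ^+ 2 - u.

Definition pair_poly (am b0 bm : bool) (u v : Z8) :=
  2 * (u * v) * (u ^+ 2 + b0%:R * u + am%:R * v ^+ 2 + bm%:R * v).

(* The affine substitutions and multiplicities below were found by solving
   linear systems over Z_8; the identities are checked by enumerating Z_8. *)
Definition pair_gadget (am bm : bool) : seq (nat * nat * nat * (nat * nat * nat) * nat) :=
  let uv := [:: ((1, 0, 1), (0, 1, 0)); ((1, 1, 0), (0, 0, 1)); ((0, 0, 1), (0, 1, 0));
                ((0, 1, 0), (0, 0, 1)); ((1, 0, 0), (0, 0, 1)); ((1, 0, 0), (0, 1, 0));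
                ((1, 1, 0), (0, 1, 0)); ((0, 1, 0), (0, 1, 0))] in
  zip uv (match am, bm with
          | true, true => [:: 1; 0; 7; 0; 0; 0; 7; 1]
          | true, false => [:: 0; 5; 0; 3; 7; 1; 7; 1]
          | false, true => [:: 3; 1; 3; 1; 7; 1; 0; 0]
          | false, false => [::] end)%N.

Lemma pair_gadget_poly am b0 bm s t :
  \sum_(e <- pair_gadget am bm) pair_poly am b0 bm (affine e.1.1 s t) (affine e.1.2 s t) *+ e.2
  = 2 * s * (am%:R * cube_sub t + bm%:R * sqr_sub t).
Proof. by rewrite unlock; move: s t; case: am b0 bm => [] [] []; apply: Z8_eq2; vm_compute. Qed.

Lemma pair_gadget_uv am bm s t :
  \sum_(e <- pair_gadget am bm) 2 * (affine e.1.1 s t * affine e.1.2 s t) *+ e.2 = 0.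
Proof. by rewrite unlock; move: s t; case: am bm => [] []; apply: Z8_eq2; vm_compute. Qed.

Definition target (N u : Z8) := if odd N then u ^+ 3 else u * (u ^+ 2 + 1).

(* Only N mod 4 matters, since N enters through 2 N u. *)
Definition unary_gadget (N : Z8) (bp : bool) : seq (nat * nat * nat * nat) :=
  let us := [:: (1, 0, 0); (1, 0, 1); (0, 0, 1); (3, 0, 0); (2, 0, 0)] in
  zip us (match (N %% 4)%N, bp with
          | 0, true => [:: 1; 1; 0; 1; 0]
          | 0, false => [:: 0; 0; 0; 1; 1]
          | 1, true => [:: 0; 1; 3; 0; 0]
          | 1, false => [:: 0; 0; 0; 3; 0]
          | 2, true => [:: 0; 1; 1; 0; 0]
          | 2, false => [:: 0; 0; 0; 1; 0]
          | _, true => [:: 0; 3; 1; 0; 0]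
          | _, false => [:: 0; 0; 0; 1; 0] end)%N.

Lemma unary_gadget_sum bp N u :
  \sum_(e <- unary_gadget N bp)
     2 * (cube_sub (affine e.1 u u) + bp%:R * sqr_sub (affine e.1 u u) + N * affine e.1 u u) *+ e.2
  = 2 * target N u.
Proof. by rewrite unlock; move: N u; case: bp; apply: Z8_eq2; vm_compute. Qed.

Lemma big_D2 (R : Type) (idx : R) (op : Monoid.com_law idx) n (F : 'I_n -> R) (i j : 'I_n) :
  j != i -> \big[op/idx]_k F k = op (F i) (op (F j) (\big[op/idx]_(k | (k != i) && (k != j)) F k)).
Proof. by move=> ji; rewrite (bigD1 i) // (bigD1 j). Qed.

Definition prod_but n (x : 'I_n -> Z8) (j : 'I_n) := \prod_(i | i != j) x i.

Lemma prod_but_split n (x : 'I_n -> Z8) j : \prod_i x i = x j * prod_but x j.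
Proof. exact: bigD1. Qed.

Lemma prod_but_setv n (x : 'I_n -> Z8) j u : prod_but (setv x j u) j = prod_but x j.
Proof. by apply: eq_bigr => i; exact: setv_ne. Qed.

Lemma prod_but_tperm n (x : 'I_n -> Z8) i j : prod_but (x \o tperm i j) i = prod_but x j.
Proof.
rewrite /prod_but [RHS](reindex_inj (@perm_inj _ (tperm i j))) /=.
by apply: eq_bigl => k; rewrite (can2_eq (tpermK i j) (tpermK i j)) tpermR.
Qed.

Section Reduction.
Variables (n : nat) (a b : 'I_n -> bool) (c : 'I_4).
Local Notation f := (g1op a b c).

Definition local_part j u := (a j)%:R * cube_sub u + (b j)%:R * sqr_sub u.
Definition coef_sum : Z8 := \sum_j ((a j)%:R + (b j)%:R) + (nat_of_ord c)%:R.
Definition g1_summand j : op n := fun x => 2 * prod_but x j * local_part j (x j).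

Lemma g1op_decomp x : f x = \sum_j g1_summand j x + 2 * (\prod_i x i) * coef_sum.
Proof.
have summandE j : g1_summand j x + 2 * (\prod_i x i) * ((a j)%:R + (b j)%:R)
    = 2 * (\prod_i x i) * ((a j)%:R * x j ^+ 2 + (b j)%:R * x j).
  by rewrite (prod_but_split x j) /g1_summand /local_part /cube_sub /sqr_sub; ring.
rewrite /coef_sum [in RHS]mulrDr [in RHS]mulr_sumr addrA -big_split /=.
by rewrite (eq_bigr _ (fun j _ => summandE j)) -mulr_sumr big_split /= -mulrDr.
Qed.

Variable p : 'I_n.
Hypothesis ap : a p.

Definition others_prod m (x : 'I_n -> Z8) := \prod_(i | (i != p) && (i != m)) x i.
Definition others_const m (x : 'I_n -> Z8) : Z8 :=
  \sum_(i | (i != p) && (i != m)) (a i)%:R * x i ^+ 2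
  + \sum_(i | (i != p) && (i != m)) (b i)%:R * x i + (nat_of_ord c)%:R.

Lemma g1op_split2 m y : m != p ->
  f y = others_prod m y
        * (pair_poly (a m) (b p) (b m) (y p) (y m) + others_const m y * (2 * (y p * y m))).
Proof.
move=> mp; rewrite /g1op !(big_D2 _ _ mp) /= /others_prod /others_const /pair_poly ap /=.
ring.
Qed.

Lemma g1op_set2 m x u v : m != p ->
  f (setv (setv x m v) p u)
  = others_prod m x * (pair_poly (a m) (b p) (b m) u v + others_const m x * (2 * (u * v))).
Proof.
move=> mp; set y := setv _ p u.
have yo i : (i != p) && (i != m) -> y i = x i by case/andP=> ip im; rewrite /y !setv_ne.
have yp : y p = u by exact: setv_id.
have ym : y m = v by rewrite /y setv_ne // setv_id.
rewrite (g1op_split2 _ mp) yp ym.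
have -> : others_prod m y = others_prod m x by apply: eq_bigr => i /yo.
have -> // : others_const m y = others_const m x.
by rewrite /others_const; congr (_ + _ + _); apply: eq_bigr => i /yo->.
Qed.

Lemma g1_summand_others m x : m != p ->
  g1_summand m x = others_prod m x * (2 * x p * local_part m (x m)).
Proof.
move=> mp; rewrite /g1_summand /prod_but (bigD1 p) 1?eq_sym //= /others_prod.
rewrite (eq_bigl (fun i => (i != p) && (i != m))) => [|i]; last by rewrite andbC.
ring.
Qed.

Lemma inC_g1_summand m : m != p -> inC f (g1_summand m).
Proof.
move=> mp; pose sub (uv : (nat * nat * nat) * (nat * nat * nat)) (x : 'I_n -> Z8) :=
  setv (setv x m (affine uv.2 (x p) (x m))) p (affine uv.1 (x p) (x m)).
apply: (@inC_ext _ _ _ (fun x => \sum_(e <- pair_gadget (a m) (b m)) f (sub e.1 x) *+ e.2)).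
  apply: (inC_sum p) => e _; apply: (inC_mulrn p); apply: inC_comp_map (inC_gen _) _.
  have Csub := inC_map_set p (inC_map_set m (@inC_proj _ f n) (inC_affine f p m e.1.2))
                             (inC_affine f p m e.1.1).
  exact: Csub.
move=> x; rewrite (g1_summand_others _ mp).
under eq_bigr => e _ do
  rewrite /sub g1op_set2 // -(mulrnAr (others_prod m x)) mulrnDl -(mulrnAr (others_const m x)).
rewrite -mulr_sumr big_split /= -mulr_sumr pair_gadget_poly pair_gadget_uv.
by rewrite mulr0 addr0.
Qed.

Definition reduced : op n := fun x => prod_but x p * (2 * (local_part p (x p) + coef_sum * x p)).

Lemma inC_reduced : inC f reduced.
Proof.
have CE : inC f (fun x => f x + (\sum_(m | m != p) g1_summand m x) *+ 7).
  apply: inC_addr; first exact: inC_gen.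
  by apply: (inC_mulrn p); apply: (inC_sum p) => m; exact: inC_g1_summand.
apply: inC_ext CE _ => x.
rewrite g1op_decomp (bigD1 p) //= Z8_mulr7n (prod_but_split x p) /reduced /g1_summand.
ring.
Qed.

Lemma inC_target : inC f (fun x => 2 * prod_but x p * target coef_sum (x p)).
Proof.
apply: (@inC_ext _ _ _ (fun x =>
   \sum_(e <- unary_gadget coef_sum (b p)) reduced (setv x p (affine e.1 (x p) (x p))) *+ e.2)).
  apply: (inC_sum p) => e _; apply: (inC_mulrn p); apply: inC_comp_map inC_reduced _.
  have Csub := inC_map_set p (@inC_proj _ f n) (inC_affine f p p e.1).
  exact: Csub.
have local_partE u : local_part p u = cube_sub u + (b p)%:R * sqr_sub u.
  by rewrite /local_part ap /= mul1r.
move=> x; under eq_bigr => e _ do rewrite /reduced prod_but_setv setv_id local_partE -mulrnAr.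
by rewrite -mulr_sumr unary_gadget_sum mulrCA mulrA.
Qed.

Lemma inC_target_at (o : 'I_n) : inC f (fun x => 2 * prod_but x o * target coef_sum (x o)).
Proof.
apply: inC_ext (inC_comp_map inC_target (fun j => inC_proj f (tperm p o j))) _ => x /=.
by rewrite tpermL prod_but_tperm.
Qed.

End Reduction.

Theorem lemma4p4 (n : nat) (hn : (0 < n)%N) (a b : 'I_n -> bool) (c : 'I_4) :
  (exists i, a i) ->
  inC (g1op a b c) (fun x => 2 * w_op (Ordinal hn) x) \/
  inC (g1op a b c) (fun x => 2 * q_op (Ordinal hn) x).
Proof.
move=> [p ap]; have := @inC_target_at n a b c p ap (Ordinal hn).
rewrite /target; case: (odd _) => C; [right | left]; apply: inC_ext C _ => x.
  by rewrite /q_op /prod_but; ring.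
by rewrite /w_op (prod_but_split x (Ordinal hn)); ring.
Qed.
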